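(* Let $c\in(-1,0]$ and let $x,y,z\in[c,1]$ satisfy $x+yz\ge0$, $y+xz\ge0$, $z+xy\ge0$. Then $$2-x^2-y^2+x+yz+y+xz+z+xy\ge 1+c.$$ *)

From Stdlib Require Import Reals Lra Psatz.

(* For x >= 0 the left side is (1 - y (y - z)) + (1 + x - x^2) + (y + x z) + (z + x y):
   the middle term is at least 1, the last two are nonnegative, and y (y - z) <= 1 - c
   on the box [c, 1]^2; the case y >= 0 is symmetric. For x, y <= 0 both squares are at
   most -c, and the three hypotheses bound the rest of the left side from below by 0. *)
From Stdlib Require Import Reals Lra Psatz.
Open Scope R_scope.

Lemma sqr_le_opp_lower (c x : R) : -1 <= c -> c <= x <= 0 -> x ^ 2 <= - c.
Proof. intros Hc Hx; nra. Qed.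

Lemma mul_sub_le_one_sub (c y z : R) :
  -1 <= c <= 0 -> c <= y <= 1 -> c <= z <= 1 -> y * (y - z) <= 1 - c.
Proof.
intros Hc Hy Hz.
destruct (Rle_lt_dec 0 y) as [Hy0 | Hy0].
- assert (0 <= y * ((1 - c) - (y - z))) by (apply Rmult_le_pos; lra).
  assert (0 <= (1 - y) * (1 - c)) by (apply Rmult_le_pos; lra).
  lra.
- assert (Hsq : y ^ 2 <= - c) by (apply sqr_le_opp_lower; lra).
  assert (0 <= (- y) * (1 - z)) by (apply Rmult_le_pos; lra).
  nra.
Qed.

Lemma proposition3p1_nonneg (c x y z : R) :
  -1 <= c <= 0 -> 0 <= x <= 1 -> c <= y <= 1 -> c <= z <= 1 ->
  0 <= y + x * z -> 0 <= z + x * y ->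
  2 - x ^ 2 - y ^ 2 + x + y * z + y + x * z + z + x * y >= 1 + c.
Proof.
intros Hc Hx Hy Hz Hyxz Hzxy.
assert (Hxx : x ^ 2 <= x) by nra.
assert (Hyz : y * (y - z) <= 1 - c) by (apply mul_sub_le_one_sub; lra).
nra.
Qed.

Lemma proposition3p1_nonpos (c x y z : R) :
  -1 <= c -> c <= x <= 0 -> c <= y <= 0 ->
  0 <= x + y * z -> 0 <= y + x * z -> 0 <= z + x * y ->
  2 - x ^ 2 - y ^ 2 + x + y * z + y + x * z + z + x * y >= 1 + c.
Proof.
intros Hc Hx Hy Hxyz Hyxz Hzxy.
assert (x ^ 2 <= - c) by (apply sqr_le_opp_lower; lra).
assert (y ^ 2 <= - c) by (apply sqr_le_opp_lower; lra).
lra.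
Qed.

Theorem proposition3p1 (c x y z : R) :
  -1 < c <= 0 ->
  c <= x <= 1 -> c <= y <= 1 -> c <= z <= 1 ->
  0 <= x + y * z -> 0 <= y + x * z -> 0 <= z + x * y ->
  2 - x ^ 2 - y ^ 2 + x + y * z + y + x * z + z + x * y >= 1 + c.
Proof.
intros Hc Hx Hy Hz Hxyz Hyxz Hzxy.
destruct (Rle_lt_dec 0 x) as [Hx0 | Hx0].
- apply proposition3p1_nonneg; lra.
- destruct (Rle_lt_dec 0 y) as [Hy0 | Hy0].
  + assert (Hswap := proposition3p1_nonneg c y x z).
    rewrite (Rmult_comm y x) in Hswap.
    lra.
  + apply proposition3p1_nonpos; lra.
Qed.
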